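(* Let $c,g,e\in\mathbb{R}$, $h\in(0,1]$, $\tau>0$, and let $\theta^j=(\theta^j_i)_{i\in\mathbb{Z}}\in\ell^2(\mathbb{Z})$. Let $T^{j+1}$ be the operator on $\ell^2(\mathbb{Z})$ with matrix entries $$(T^{j+1})_{i,r}=\delta_{i,r}-\frac{c\tau}{2h}(\delta_{i+1,r}-\delta_{i-1,r})-\frac{g\tau}{2h}\Big[\theta^j_i(\delta_{i+1,r}-\delta_{i-1,r})+\delta_{i,r}(\theta^j_{i+1}-\theta^j_{i-1})\Big]-\frac{e\tau}{2h^3}\big[\delta_{i+2,r}-2\delta_{i+1,r}+2\delta_{i-1,r}-\delta_{i-2,r}\big],$$ i.e. the Jacobian $\partial\theta^{j+1}_i/\partial\theta^j_r$ of the one-step map of the scheme $$\frac{\theta^{j+1}_i-\theta^j_i}{\tau}+c\frac{\theta^j_{i+1}-\theta^j_{i-1}}{2h}+g\,\theta^j_i\frac{\theta^j_{i+1}-\theta^j_{i-1}}{2h}+e\frac{\theta^j_{i+2}-2\theta^j_{i+1}+2\theta^j_{i-1}-\theta^j_{i-2}}{2h^3}=0 .$$ Suppose $\tau\le K h^6$ for some constant $K$, and $\sup_i|\theta^j_i|\le B$, $\sup_i|\theta^j_{i+1}-\theta^j_i|/h\le B$. Then there is a constant $a$ depending only on $c,g,e,K,B$ (and not on $h,\tau$) such that the spectral norm satisfies $\|T^{j+1}\|\le e^{a\tau}$.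
   Context: $\delta_{i,r}$ is the Kronecker delta; the spectral norm is the operator norm on $\ell^2(\mathbb{Z})$. *)

From Stdlib Require Import Reals ZArith.
From Coquelicot Require Import Coquelicot.
Open Scope R_scope.

Definition kdelta (i r : Z) : R := if Z.eq_dec i r then 1 else 0.

Definition l2_partial (x : Z -> R) (N : nat) : R :=
  sum_f_R0 (fun k => (x (Z.of_nat k - Z.of_nat N)%Z) ^ 2) (2 * N).

Definition is_l2 (x : Z -> R) : Prop := ex_finite_lim_seq (l2_partial x).

Definition l2norm (x : Z -> R) : R := sqrt (real (Lim_seq (l2_partial x))).

(* ||A|| <= M for the operator norm on l^2(Z): A maps l^2 to l^2 and
   ||A x|| <= M ||x|| for every x in l^2 (definition of the operator norm
   as the least such M). *)
Definition opnorm_le (A : (Z -> R) -> (Z -> R)) (M : R) : Prop :=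
  forall x : Z -> R, is_l2 x -> is_l2 (A x) /\ l2norm (A x) <= M * l2norm x.

Definition Tmat (c g e h tau : R) (theta : Z -> R) (i r : Z) : R :=
  kdelta i r
  - c * tau / (2 * h) * (kdelta (i + 1) r - kdelta (i - 1) r)
  - g * tau / (2 * h) *
      (theta i * (kdelta (i + 1) r - kdelta (i - 1) r)
       + kdelta i r * (theta (i + 1)%Z - theta (i - 1)%Z))
  - e * tau / (2 * h ^ 3) *
      (kdelta (i + 2) r - 2 * kdelta (i + 1) r + 2 * kdelta (i - 1) r
       - kdelta (i - 2) r).

(* Action of the matrix on a sequence: (T x)_i = sum_r T_{i,r} x_r.
   Row i of Tmat vanishes outside r in [i-2, i+2], so the sum over Z
   reduces to these five terms. *)
Definition Tapply (c g e h tau : R) (theta : Z -> R) (x : Z -> R) (i : Z) : R :=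
  sum_f_R0 (fun k => Tmat c g e h tau theta i (i - 2 + Z.of_nat k)%Z
                     * x (i - 2 + Z.of_nat k)%Z) 4.

From Stdlib Require Import Reals ZArith Lra Lia Psatz.
From Coquelicot Require Import Coquelicot.
Open Scope R_scope.

(* Write T = I + tau Y with Y = kdv_lin, so that
     |T x|^2 = |x|^2 + 2 tau <x, Y x> + tau^2 |Y x|^2.
   The centred differences d1 and d3 are skew-adjoint, so only the nonlinear transport term
   contributes to <x, Y x>; after summation by parts it is at most (3/2) |g| B |x|^2, since the
   differences of theta are at most B h.  Crudely |Y x| = O(h^-3) |x|, and tau <= K h^6 turns
   tau^2 |Y x|^2 into O(tau) |x|^2.  Hence |T x|^2 <= (1 + A tau) |x|^2 <= exp (A tau) |x|^2.
   The estimate is proved for finitely supported x, where every sum is finite, and extends to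
   l^2 by truncation because (T x)_i only depends on x_(i-2), ..., x_(i+2). *)

(** * Elementary real inequalities *)

Lemma Rdiv_le_compat_pos a b d : 0 < d -> a <= b -> a / d <= b / d.
Proof. intros Hd Hab; apply Rmult_le_compat_r; [left; apply Rinv_0_lt_compat|]; assumption. Qed.

Lemma Rabs_div_pos a b : 0 < b -> Rabs (a / b) = Rabs a / b.
Proof. intros Hb; rewrite Rabs_div, (Rabs_pos_eq b); lra. Qed.

Lemma abs_mul_le_half_sq a b : Rabs (a * b) <= (a ^ 2 + b ^ 2) / 2.
Proof.
  rewrite Rabs_mult, <- (pow2_abs a), <- (pow2_abs b).
  pose proof (pow2_ge_0 (Rabs a - Rabs b)); lra.
Qed.

Lemma sq_mul_le a p Q : Rabs a <= Q -> (a * p) ^ 2 <= Q ^ 2 * p ^ 2.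
Proof.
  intros Ha. rewrite Rpow_mult_distr, <- (pow2_abs a).
  apply Rmult_le_compat_r; [apply pow2_ge_0|apply pow_incr; split; [apply Rabs_pos|exact Ha]].
Qed.

Lemma sq_five_point_le a1 a2 a0 Q u v w y z :
  Rabs a1 <= Q -> Rabs a2 <= Q -> Rabs a0 <= Q ->
  (a1 * (u - v) + a2 * (w - y) + a0 * z) ^ 2
  <= 6 * Q ^ 2 * (u ^ 2 + v ^ 2 + w ^ 2 + y ^ 2 + z ^ 2).
Proof.
  intros H1 H2 H0.
  pose proof (sq_mul_le _ (u - v) _ H1). pose proof (sq_mul_le _ (w - y) _ H2).
  pose proof (sq_mul_le _ z _ H0).
  set (r1 := a1 * (u - v)) in *. set (r2 := a2 * (w - y)) in *. set (r3 := a0 * z) in *.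
  assert ((r1 + r2 + r3) ^ 2 <= 3 * (r1 ^ 2 + r2 ^ 2 + r3 ^ 2))
    by (pose proof (pow2_ge_0 (r1 - r2)); pose proof (pow2_ge_0 (r2 - r3));
        pose proof (pow2_ge_0 (r1 - r3)); nra).
  assert ((u - v) ^ 2 <= 2 * (u ^ 2 + v ^ 2)) by (pose proof (pow2_ge_0 (u + v)); nra).
  assert ((w - y) ^ 2 <= 2 * (w ^ 2 + y ^ 2)) by (pose proof (pow2_ge_0 (w + y)); nra).
  pose proof (pow2_ge_0 Q). pose proof (pow2_ge_0 z).
  nra.
Qed.

Lemma sqrt_one_plus_le_exp u : 0 <= 1 + u -> sqrt (1 + u) <= exp (u / 2).
Proof.
  intros Hu. rewrite <- (sqrt_pow2 (exp (u / 2))) by (left; apply exp_pos).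
  apply sqrt_le_1_alt.
  replace (exp (u / 2) ^ 2) with (exp u) by (simpl; rewrite Rmult_1_r, <- exp_plus; f_equal; field).
  apply exp_ineq1_le.
Qed.

(** * Finite sums over windows of integers *)

Fixpoint zsum (f : Z -> R) (a : Z) (n : nat) : R :=
  match n with O => 0 | S n => f a + zsum f (a + 1)%Z n end.

Lemma zsum_ext f g a n :
  (forall i, (a <= i < a + Z.of_nat n)%Z -> f i = g i) -> zsum f a n = zsum g a n.
Proof.
  revert a; induction n as [|n IH]; intros a H; simpl; [reflexivity|].
  rewrite (H a), (IH (a + 1)%Z); [reflexivity | intros i Hi; apply H |]; lia.
Qed.

Lemma zsum_le f g a n :
  (forall i, (a <= i < a + Z.of_nat n)%Z -> f i <= g i) -> zsum f a n <= zsum g a n.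
Proof.
  revert a; induction n as [|n IH]; intros a H; simpl; [lra|].
  assert (f a <= g a) by (apply H; lia).
  assert (zsum f (a + 1) n <= zsum g (a + 1) n) by (apply IH; intros i Hi; apply H; lia).
  lra.
Qed.

Lemma zsum_nonneg f a n : (forall i, 0 <= f i) -> 0 <= zsum f a n.
Proof.
  intros H; revert a; induction n as [|n IH]; intros a; simpl; [lra|].
  specialize (IH (a + 1)%Z); specialize (H a); lra.
Qed.

Lemma zsum_plus f g a n : zsum (fun i => f i + g i) a n = zsum f a n + zsum g a n.
Proof. revert a; induction n as [|n IH]; intros a; simpl; [|rewrite IH]; lra. Qed.

Lemma zsum_scal k f a n : zsum (fun i => k * f i) a n = k * zsum f a n.
Proof. revert a; induction n as [|n IH]; intros a; simpl; [|rewrite IH]; lra. Qed.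

Lemma zsum_abs f a n : Rabs (zsum f a n) <= zsum (fun i => Rabs (f i)) a n.
Proof.
  revert a; induction n as [|n IH]; intros a; simpl.
  - rewrite Rabs_R0; lra.
  - eapply Rle_trans; [apply Rabs_triang|]. specialize (IH (a + 1)%Z); lra.
Qed.

Lemma zsum_app f a m n : zsum f a (m + n) = zsum f a m + zsum f (a + Z.of_nat m) n.
Proof.
  revert a; induction m as [|m IH]; intros a; simpl.
  - rewrite Z.add_0_r; lra.
  - rewrite IH.
    replace (a + 1 + Z.of_nat m)%Z with (a + Z.pos (Pos.of_succ_nat m))%Z by lia.
    lra.
Qed.

Lemma zsum_shift f a n k : zsum (fun i => f (i + k)%Z) a n = zsum f (a + k) n.
Proof.
  revert a; induction n as [|n IH]; intros a; simpl; [reflexivity|].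
  now rewrite IH, <- !Z.add_assoc, (Z.add_comm 1 k).
Qed.

Lemma zsum_telescope p a n :
  zsum (fun i => p i - p (i - 1)%Z) a n = p (a + Z.of_nat n - 1)%Z - p (a - 1)%Z.
Proof.
  revert a; induction n as [|n IH]; intros a; simpl.
  - rewrite Z.add_0_r; lra.
  - rewrite IH, Z.add_simpl_r.
    replace (a + 1 + Z.of_nat n - 1)%Z with (a + Z.pos (Pos.of_succ_nat n) - 1)%Z by lia.
    lra.
Qed.

Lemma zsum_window f a n lo m :
  (forall i, (i < lo \/ lo + Z.of_nat m <= i)%Z -> f i = 0) ->
  (a <= lo)%Z -> (lo + Z.of_nat m <= a + Z.of_nat n)%Z ->
  zsum f a n = zsum f lo m.
Proof.
  intros Hf Ha Hn.
  set (p := Z.to_nat (lo - a)).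
  replace n with (p + m + (n - p - m))%nat by (unfold p; lia).
  rewrite !zsum_app.
  replace (a + Z.of_nat (p + m))%Z with (lo + Z.of_nat m)%Z by (unfold p; lia).
  replace (a + Z.of_nat p)%Z with lo by (unfold p; lia).
  rewrite (zsum_ext f (fun _ => 0) a p), (zsum_ext f (fun _ => 0) (lo + Z.of_nat m))
    by (intros i Hi; apply Hf; unfold p in Hi; lia).
  rewrite <- (Rmult_0_l 0), !(zsum_scal 0 (fun _ => 0)). lra.
Qed.

Lemma zsum_window_le f a n lo m :
  (forall i, 0 <= f i) ->
  (a <= lo)%Z -> (lo + Z.of_nat m <= a + Z.of_nat n)%Z ->
  zsum f lo m <= zsum f a n.
Proof.
  intros Hf Ha Hn.
  set (p := Z.to_nat (lo - a)).
  replace n with (p + m + (n - p - m))%nat by (unfold p; lia).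
  rewrite !zsum_app.
  replace (a + Z.of_nat (p + m))%Z with (lo + Z.of_nat m)%Z by (unfold p; lia).
  replace (a + Z.of_nat p)%Z with lo by (unfold p; lia).
  pose proof (zsum_nonneg f a p Hf).
  pose proof (zsum_nonneg f (lo + Z.of_nat m) (n - p - m) Hf). lra.
Qed.

Definition ssum (f : Z -> R) (N : nat) : R := zsum f (- Z.of_nat N) (2 * N + 1).

Lemma ssum_ext f g N :
  (forall i, (- Z.of_nat N <= i <= Z.of_nat N)%Z -> f i = g i) -> ssum f N = ssum g N.
Proof. intros H; apply zsum_ext; intros i Hi; apply H; lia. Qed.

Lemma ssum_le f g N : (forall i, f i <= g i) -> ssum f N <= ssum g N.
Proof. intros H; apply zsum_le; auto. Qed.

Lemma ssum_plus f g N : ssum (fun i => f i + g i) N = ssum f N + ssum g N.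
Proof. apply zsum_plus. Qed.

Lemma ssum_scal k f N : ssum (fun i => k * f i) N = k * ssum f N.
Proof. apply zsum_scal. Qed.

Lemma ssum_abs f N : Rabs (ssum f N) <= ssum (fun i => Rabs (f i)) N.
Proof. apply zsum_abs. Qed.

Lemma ssum_nonneg f N : (forall i, 0 <= f i) -> 0 <= ssum f N.
Proof. apply zsum_nonneg. Qed.

Lemma ssum_mono f M N : (forall i, 0 <= f i) -> (M <= N)%nat -> ssum f M <= ssum f N.
Proof. intros Hf HN; apply zsum_window_le; [assumption|lia..]. Qed.

Lemma ssum_telescope p N :
  ssum (fun i => p i - p (i - 1)%Z) N = p (Z.of_nat N) - p (- Z.of_nat N - 1)%Z.
Proof.
  unfold ssum. rewrite zsum_telescope.
  now replace (- Z.of_nat N + Z.of_nat (2 * N + 1) - 1)%Z with (Z.of_nat N) by lia.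
Qed.

Lemma ssum_vanish_telescope p N :
  p (Z.of_nat N) = 0 -> p (- Z.of_nat N - 1)%Z = 0 ->
  ssum (fun i => p i - p (i - 1)%Z) N = 0.
Proof. intros H1 H2; rewrite ssum_telescope, H1, H2; ring. Qed.

Lemma sum_f_R0_zsum f a n :
  sum_f_R0 (fun k => f (a + Z.of_nat k)%Z) n = zsum f a (S n).
Proof.
  induction n as [|n IH].
  - simpl; rewrite Z.add_0_r; lra.
  - rewrite tech5, IH, <- (Nat.add_1_r (S n)), (zsum_app f a (S n) 1); simpl; lra.
Qed.

Lemma l2_partial_ssum x N : l2_partial x N = ssum (fun i => x i ^ 2) N.
Proof.
  unfold l2_partial, ssum. rewrite Nat.add_1_r, <- sum_f_R0_zsum.
  apply sum_eq; intros k _. now rewrite Z.add_comm.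
Qed.

Definition supported (x : Z -> R) (M : nat) : Prop :=
  forall i, (i < - Z.of_nat M \/ Z.of_nat M < i)%Z -> x i = 0.

Ltac vanish_outside x Hx :=
  repeat match goal with |- context [x ?j] => rewrite (Hx j) by lia end.

Lemma supported_sq x M : supported x M -> supported (fun i => x i ^ 2) M.
Proof. intros Hx i Hi; rewrite (Hx i Hi); ring. Qed.

Lemma ssum_shift_supported f M N k :
  supported f M -> (Z.of_nat M + Z.abs k <= Z.of_nat N)%Z ->
  ssum (fun i => f (i + k)%Z) N = ssum f M.
Proof.
  intros Hf HN. unfold ssum. rewrite zsum_shift.
  apply zsum_window; [intros i Hi; apply Hf|..]; lia.
Qed.

Lemma ssum_supported f M N : supported f M -> (M <= N)%nat -> ssum f N = ssum f M.
Proof.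
  intros Hf HN. rewrite <- (ssum_shift_supported f M N 0 Hf) by lia.
  apply zsum_ext; intros i _; now rewrite Z.add_0_r.
Qed.

Definition truncate (x : Z -> R) (M : nat) (i : Z) : R :=
  if (Z.abs i <=? Z.of_nat M)%Z then x i else 0.

Lemma truncate_supported x M : supported (truncate x M) M.
Proof. intros i Hi; unfold truncate; destruct (Z.leb_spec (Z.abs i) (Z.of_nat M)); lia || reflexivity. Qed.

Lemma truncate_eq x M i : (Z.abs i <= Z.of_nat M)%Z -> truncate x M i = x i.
Proof. intros Hi; unfold truncate; destruct (Z.leb_spec (Z.abs i) (Z.of_nat M)); lia || reflexivity. Qed.

(** * Operator norm bounds from finitely supported vectors *)

Lemma l2_partial_le_succ x N : l2_partial x N <= l2_partial x (S N).
Proof. rewrite !l2_partial_ssum; apply ssum_mono; [intros; apply pow2_ge_0|lia]. Qed.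

Lemma opnorm_le_of_local (A : (Z -> R) -> Z -> R) (w : nat) (C : R) :
  0 <= C ->
  (forall x y i, (forall k, (i - Z.of_nat w <= k <= i + Z.of_nat w)%Z -> x k = y k) ->
     A x i = A y i) ->
  (forall x M, supported x M ->
     ssum (fun i => A x i ^ 2) (M + w) <= C * ssum (fun i => x i ^ 2) M) ->
  opnorm_le A (sqrt C).
Proof.
  intros HC Hloc Hbd x [L HL].
  assert (Hpartial : forall N, l2_partial (A x) N <= C * L).
  { intros N. set (xt := truncate x (N + w)).
    assert (Hxt : forall i, (Z.abs i <= Z.of_nat N)%Z -> A x i = A xt i)
      by (intros i Hi; apply Hloc; intros k Hk; unfold xt; rewrite truncate_eq by lia; reflexivity).
    rewrite l2_partial_ssum, (ssum_ext _ (fun i => A xt i ^ 2)) by (intros i Hi; rewrite Hxt by lia; reflexivity).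
    eapply Rle_trans; [apply (ssum_mono _ N (N + w + w)); [intros; apply pow2_ge_0|lia]|].
    eapply Rle_trans; [apply Hbd, truncate_supported|].
    apply Rmult_le_compat_l; [exact HC|].
    rewrite (ssum_ext _ (fun i => x i ^ 2)) by (intros i Hi; unfold xt; rewrite truncate_eq by lia; reflexivity).
    rewrite <- l2_partial_ssum; apply is_lim_seq_incr_compare; [exact HL|apply l2_partial_le_succ]. }
  assert (Hex : ex_finite_lim_seq (l2_partial (A x)))
    by (apply ex_finite_lim_seq_incr with (C * L); [apply l2_partial_le_succ|exact Hpartial]).
  split; [exact Hex|].
  destruct Hex as [L' HL'].
  assert (HLL : L' <= C * L)
    by exact (is_lim_seq_le _ (fun _ => C * L) L' (C * L) Hpartial HL' (is_lim_seq_const _)).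
  unfold l2norm; rewrite (is_lim_seq_unique _ _ HL'), (is_lim_seq_unique _ _ HL); simpl.
  assert (HL0 : 0 <= L).
  { eapply Rle_trans; [|apply (is_lim_seq_incr_compare _ L HL (l2_partial_le_succ x) 0)].
    rewrite l2_partial_ssum; apply ssum_nonneg; intros; apply pow2_ge_0. }
  rewrite <- sqrt_mult by assumption.
  apply sqrt_le_1_alt, HLL.
Qed.

Lemma opnorm_le_trans A M M' : opnorm_le A M -> M <= M' -> opnorm_le A M'.
Proof.
  intros HA HM x Hx; destruct (HA x Hx) as [HAx Hle]; split; [exact HAx|].
  pose proof (sqrt_pos (real (Lim_seq (l2_partial x)))).
  eapply Rle_trans; [exact Hle|]; apply Rmult_le_compat_r; [assumption|exact HM].
Qed.

(** * The linearised scheme *)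

Definition d1 (x : Z -> R) (i : Z) : R := x (i + 1)%Z - x (i - 1)%Z.

Definition d3 (x : Z -> R) (i : Z) : R :=
  x (i + 2)%Z - 2 * x (i + 1)%Z + 2 * x (i - 1)%Z - x (i - 2)%Z.

Definition kdv_lin (c g e h : R) (theta x : Z -> R) (i : Z) : R :=
  - c / (2 * h) * d1 x i
  - g / (2 * h) * (theta i * d1 x i + x i * d1 theta i)
  - e / (2 * h ^ 3) * d3 x i.

Lemma Tapply_eq c g e h tau theta x i :
  Tapply c g e h tau theta x i = x i + tau * kdv_lin c g e h theta x i.
Proof.
  unfold Tapply, Tmat, kdv_lin, d1, d3; simpl sum_f_R0.
  replace (i - 2 + 0)%Z with (i - 2)%Z by lia.
  replace (i - 2 + 1)%Z with (i - 1)%Z by lia.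
  replace (i - 2 + 2)%Z with i by lia.
  replace (i - 2 + 3)%Z with (i + 1)%Z by lia.
  replace (i - 2 + 4)%Z with (i + 2)%Z by lia.
  unfold kdelta; repeat (destruct (Z.eq_dec _ _); try (exfalso; lia)).
  simpl; unfold Rdiv; ring.
Qed.

Lemma Tapply_local c g e h tau theta x y i :
  (forall k, (i - 2 <= k <= i + 2)%Z -> x k = y k) ->
  Tapply c g e h tau theta x i = Tapply c g e h tau theta y i.
Proof. intros H; apply sum_eq; intros k Hk; rewrite H by lia; reflexivity. Qed.

(* d1 and d3 are skew-adjoint: x * d1 x and x * d3 x are exact differences. *)
Lemma ssum_mul_d1 x M : supported x M -> ssum (fun i => x i * d1 x i) (M + 2) = 0.
Proof.
  intros Hx.
  rewrite (ssum_ext _ (fun i => x i * x (i + 1)%Z - x (i - 1)%Z * x (i - 1 + 1)%Z))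
    by (intros i _; unfold d1; rewrite Z.sub_add; ring).
  apply ssum_vanish_telescope; vanish_outside x Hx; ring.
Qed.

Lemma ssum_mul_d3 x M : supported x M -> ssum (fun i => x i * d3 x i) (M + 2) = 0.
Proof.
  intros Hx.
  set (p i := x i * x (i + 2)%Z + x (i - 1)%Z * x (i + 1)%Z - 2 * x i * x (i + 1)%Z).
  rewrite (ssum_ext _ (fun i => p i - p (i - 1)%Z)).
  - apply ssum_vanish_telescope; unfold p; vanish_outside x Hx; ring.
  - intros i _; unfold p, d3.
    replace (i - 1 + 2)%Z with (i + 1)%Z by lia.
    replace (i - 1 - 1)%Z with (i - 2)%Z by lia.
    rewrite Z.sub_add; ring.
Qed.

Lemma d1_abs_le theta D :
  (forall i, Rabs (theta (i + 1)%Z - theta i) <= D) -> forall i, Rabs (d1 theta i) <= 2 * D.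
Proof.
  intros H i; unfold d1.
  replace (theta (i + 1)%Z - theta (i - 1)%Z)
    with ((theta (i + 1)%Z - theta i) + (theta (i - 1 + 1)%Z - theta (i - 1)%Z))
    by (rewrite Z.sub_add; ring).
  eapply Rle_trans; [apply Rabs_triang|].
  pose proof (H i); pose proof (H (i - 1)%Z); lra.
Qed.

(* Summation by parts moves the difference from x onto theta. *)
Lemma ssum_transport_abs_le theta x M D :
  supported x M -> (forall i, Rabs (theta (i + 1)%Z - theta i) <= D) ->
  Rabs (ssum (fun i => x i * (theta i * d1 x i + x i * d1 theta i)) (M + 2))
  <= 3 * D * ssum (fun i => x i ^ 2) M.
Proof.
  intros Hx HD.
  set (p i := theta i * x i * x (i + 1)%Z).
  set (r i := (theta (i - 1)%Z - theta i) * (x (i - 1)%Z * x i) + d1 theta i * x i ^ 2).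
  rewrite (ssum_ext _ (fun i => (p i - p (i - 1)%Z) + r i))
    by (intros i _; unfold p, r, d1; rewrite Z.sub_add; ring).
  rewrite ssum_plus, ssum_vanish_telescope, Rplus_0_l by (unfold p; vanish_outside x Hx; ring).
  eapply Rle_trans; [apply ssum_abs|].
  eapply Rle_trans with (ssum (fun i => D / 2 * x (i - 1)%Z ^ 2 + 5 * D / 2 * x i ^ 2) (M + 2)).
  - apply ssum_le; intros i; unfold r.
    assert (Hprod : Rabs (theta (i - 1)%Z - theta i) * Rabs (x (i - 1)%Z * x i)
                    <= D * ((x (i - 1)%Z ^ 2 + x i ^ 2) / 2)).
    { apply Rmult_le_compat; try apply Rabs_pos; [|apply abs_mul_le_half_sq].
      rewrite Rabs_minus_sym, <- (Z.sub_add 1 i) at 1; apply HD. }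
    assert (Hsq : Rabs (d1 theta i) * x i ^ 2 <= 2 * D * x i ^ 2)
      by (apply Rmult_le_compat_r; [apply pow2_ge_0|apply d1_abs_le, HD]).
    eapply Rle_trans; [apply Rabs_triang|].
    rewrite !(Rabs_mult _ (_ ^ 2)), (Rabs_mult (_ - _)), (Rabs_pos_eq (x i ^ 2)) by apply pow2_ge_0.
    lra.
  - pose proof (supported_sq x M Hx) as Hx2.
    rewrite ssum_plus, !ssum_scal, (ssum_supported _ M (M + 2) Hx2) by lia.
    replace (ssum (fun i => x (i - 1)%Z ^ 2) (M + 2)) with (ssum (fun i => x i ^ 2) M)
      by (symmetry; exact (ssum_shift_supported _ M (M + 2) (-1) Hx2 ltac:(lia))).
    right; field.
Qed.

Lemma ssum_mul_kdv_lin_le c g e h theta x M D :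
  0 < h -> supported x M -> (forall i, Rabs (theta (i + 1)%Z - theta i) <= D) ->
  ssum (fun i => x i * kdv_lin c g e h theta x i) (M + 2)
  <= 3 * Rabs g * D / (2 * h) * ssum (fun i => x i ^ 2) M.
Proof.
  intros Hh Hx HD.
  set (T := ssum (fun i => x i * (theta i * d1 x i + x i * d1 theta i)) (M + 2)).
  assert (E : ssum (fun i => x i * kdv_lin c g e h theta x i) (M + 2)
              = - c / (2 * h) * ssum (fun i => x i * d1 x i) (M + 2) + - g / (2 * h) * T
                + - e / (2 * h ^ 3) * ssum (fun i => x i * d3 x i) (M + 2)).
  { unfold T; rewrite <- !ssum_scal, <- !ssum_plus.
    apply ssum_ext; intros i _; unfold kdv_lin, Rdiv; ring. }
  rewrite E, ssum_mul_d1, ssum_mul_d3 by assumption.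
  pose proof (ssum_transport_abs_le theta x M D Hx HD) as HT; fold T in HT.
  assert (- g / (2 * h) * T <= Rabs g / (2 * h) * Rabs T).
  { eapply Rle_trans; [apply Rle_abs|].
    rewrite Rabs_mult, Rabs_div_pos, Rabs_Ropp by lra; right; reflexivity. }
  assert (Rabs g / (2 * h) * Rabs T <= Rabs g / (2 * h) * (3 * D * ssum (fun i => x i ^ 2) M)).
  { apply Rmult_le_compat_l; [apply Rdiv_le_0_compat; [apply Rabs_pos|lra] | exact HT]. }
  replace (3 * Rabs g * D / (2 * h) * ssum (fun i => x i ^ 2) M)
    with (Rabs g / (2 * h) * (3 * D * ssum (fun i => x i ^ 2) M)) by (field; lra).
  lra.
Qed.

Definition kdv_lin_bound (c g e h B D : R) : R :=
  (Rabs c + Rabs g * B) / (2 * h) + Rabs e / h ^ 3 + Rabs g * D / h.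

Lemma kdv_lin_sq_le c g e h B D theta x i :
  0 < h -> (forall i, Rabs (theta i) <= B) ->
  (forall i, Rabs (theta (i + 1)%Z - theta i) <= D) ->
  kdv_lin c g e h theta x i ^ 2
  <= 6 * kdv_lin_bound c g e h B D ^ 2
     * (x (i + 1)%Z ^ 2 + x (i - 1)%Z ^ 2 + x (i + 2)%Z ^ 2 + x (i - 2)%Z ^ 2 + x i ^ 2).
Proof.
  intros Hh HB HD.
  assert (Hh3 : 0 < h ^ 3) by (apply pow_lt; lra).
  assert (D0 : 0 <= D) by (eapply Rle_trans; [apply Rabs_pos|apply (HD 0%Z)]).
  unfold kdv_lin_bound.
  set (qc := (Rabs c + Rabs g * B) / (2 * h)).
  set (qe := Rabs e / h ^ 3).
  set (qg := Rabs g * D / h).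
  assert (Hqc : 0 <= qc)
    by (apply Rdiv_le_0_compat; [pose proof (Rabs_pos (theta 0%Z)); pose proof (HB 0%Z);
        pose proof (Rabs_pos c); pose proof (Rabs_pos g); nra | lra]).
  assert (Hqe : 0 <= qe) by (apply Rdiv_le_0_compat; [apply Rabs_pos|lra]).
  assert (Hqg : 0 <= qg)
    by (apply Rdiv_le_0_compat; [apply Rmult_le_pos; [apply Rabs_pos|lra] | lra]).
  replace (kdv_lin c g e h theta x i)
    with ((- (c + g * theta i) / (2 * h) + e / h ^ 3) * (x (i + 1)%Z - x (i - 1)%Z)
          + (- e / (2 * h ^ 3)) * (x (i + 2)%Z - x (i - 2)%Z)
          + (- g * d1 theta i / (2 * h)) * x i)
    by (unfold kdv_lin, d1, d3; field; lra).
  apply sq_five_point_le.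
  - eapply Rle_trans; [apply Rabs_triang|].
    rewrite !Rabs_div_pos, Rabs_Ropp by lra. fold qe.
    enough (Rabs (c + g * theta i) / (2 * h) <= qc) by lra.
    apply Rdiv_le_compat_pos; [lra|].
    eapply Rle_trans; [apply Rabs_triang|].
    rewrite Rabs_mult.
    pose proof (Rmult_le_compat_l _ _ _ (Rabs_pos g) (HB i)). lra.
  - rewrite Rabs_div_pos, Rabs_Ropp by lra.
    replace (Rabs e / (2 * h ^ 3)) with (qe / 2) by (unfold qe; field; lra). lra.
  - rewrite Rabs_div_pos, Rabs_mult, Rabs_Ropp by lra.
    enough (Rabs g * Rabs (d1 theta i) / (2 * h) <= qg) by lra.
    replace qg with (Rabs g * (2 * D) / (2 * h)) by (unfold qg; field; lra).
    apply Rdiv_le_compat_pos; [lra|].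
    apply Rmult_le_compat_l; [apply Rabs_pos|apply d1_abs_le, HD].
Qed.

Lemma ssum_kdv_lin_sq_le c g e h B D theta x M :
  0 < h -> (forall i, Rabs (theta i) <= B) ->
  (forall i, Rabs (theta (i + 1)%Z - theta i) <= D) -> supported x M ->
  ssum (fun i => kdv_lin c g e h theta x i ^ 2) (M + 2)
  <= 30 * kdv_lin_bound c g e h B D ^ 2
     * ssum (fun i => x i ^ 2) M.
Proof.
  intros Hh HB HD Hx.
  pose proof (supported_sq x M Hx) as Hx2.
  eapply Rle_trans; [apply ssum_le; intros i; apply (kdv_lin_sq_le c g e h B D); assumption|].
  rewrite ssum_scal, !ssum_plus.
  assert (Hshift : forall k, (Z.abs k <= 2)%Z ->
            ssum (fun i => x (i + k)%Z ^ 2) (M + 2) = ssum (fun i => x i ^ 2) M)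
    by (intros k Hk; apply (ssum_shift_supported (fun i => x i ^ 2)); [assumption|lia]).
  rewrite (Hshift 1%Z), (Hshift 2%Z), (ssum_supported _ M (M + 2) Hx2) by lia.
  replace (ssum (fun i => x (i - 1)%Z ^ 2) (M + 2)) with (ssum (fun i => x i ^ 2) M)
    by (symmetry; exact (Hshift (-1)%Z ltac:(lia))).
  replace (ssum (fun i => x (i - 2)%Z ^ 2) (M + 2)) with (ssum (fun i => x i ^ 2) M)
    by (symmetry; exact (Hshift (-2)%Z ltac:(lia))).
  right; ring.
Qed.

Lemma ssum_Tapply_sq_le c g e h tau B D theta x M :
  0 < h -> 0 < tau -> (forall i, Rabs (theta i) <= B) ->
  (forall i, Rabs (theta (i + 1)%Z - theta i) <= D) -> supported x M ->
  ssum (fun i => Tapply c g e h tau theta x i ^ 2) (M + 2)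
  <= (1 + tau * (3 * Rabs g * D / h)
      + tau ^ 2 * (30 * kdv_lin_bound c g e h B D ^ 2))
     * ssum (fun i => x i ^ 2) M.
Proof.
  intros Hh Htau HB HD Hx.
  rewrite (ssum_ext _ (fun i => x i ^ 2 + (2 * tau) * (x i * kdv_lin c g e h theta x i)
                                + tau ^ 2 * kdv_lin c g e h theta x i ^ 2))
    by (intros i _; rewrite Tapply_eq; ring).
  rewrite !ssum_plus, !ssum_scal, (ssum_supported _ M (M + 2) (supported_sq x M Hx)) by lia.
  pose proof (ssum_mul_kdv_lin_le c g e h theta x M D Hh Hx HD).
  pose proof (ssum_kdv_lin_sq_le c g e h B D theta x M Hh HB HD Hx).
  pose proof (Rmult_le_compat_l (2 * tau) _ _ ltac:(lra) H).
  pose proof (Rmult_le_compat_l (tau ^ 2) _ _ (pow2_ge_0 tau) H0).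
  eapply Rle_trans; [apply Rplus_le_compat; [apply Rplus_le_compat_l|]; eassumption|].
  right; field; lra.
Qed.

(* The only use of tau <= K h^6: it absorbs the h^-6 of tau^2 |Y x|^2 into one factor tau. *)
Lemma kdv_growth_le c g e K B h tau :
  0 < h -> h <= 1 -> 0 < tau -> tau <= K * h ^ 6 -> 0 <= B ->
  tau * (3 * Rabs g * (B * h) / h)
  + tau ^ 2 * (30 * kdv_lin_bound c g e h B (B * h) ^ 2)
  <= tau * (3 * Rabs g * B + 30 * K * (Rabs c + 2 * Rabs g * B + Rabs e) ^ 2).
Proof.
  intros Hh Hh1 Htau HK HB.
  pose proof (Rabs_pos c); pose proof (Rabs_pos g); pose proof (Rabs_pos e).
  assert (HgB : 0 <= Rabs g * B) by (apply Rmult_le_pos; lra).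
  set (Q := kdv_lin_bound c g e h B (B * h)).
  assert (HQ : 0 <= Q).
  { unfold Q, kdv_lin_bound; repeat apply Rplus_le_le_0_compat; apply Rdiv_le_0_compat;
      try apply pow_lt; nra. }
  assert (HQh : Q * h ^ 3 <= Rabs c + 2 * Rabs g * B + Rabs e).
  { replace (Q * h ^ 3) with ((Rabs c + Rabs g * B) / 2 * h ^ 2 + Rabs e + Rabs g * B * h ^ 3)
      by (unfold Q, kdv_lin_bound; field; lra).
    assert (h ^ 2 <= 1) by (rewrite <- (pow1 2); apply pow_incr; lra).
    assert (h ^ 3 <= 1) by (rewrite <- (pow1 3); apply pow_incr; lra).
    nra. }
  assert (HQ2 : (Q * h ^ 3) ^ 2 <= (Rabs c + 2 * Rabs g * B + Rabs e) ^ 2)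
    by (apply pow_incr; split; [apply Rmult_le_pos; [|apply pow_le]; lra | exact HQh]).
  assert (HK0 : 0 <= K) by (pose proof (pow_lt h 6 Hh); nra).
  replace (3 * Rabs g * (B * h) / h) with (3 * Rabs g * B) by (field; lra).
  assert (tau ^ 2 * Q ^ 2 <= tau * (K * (Q * h ^ 3) ^ 2)).
  { replace (tau * (K * (Q * h ^ 3) ^ 2)) with (tau * (K * h ^ 6) * Q ^ 2) by ring.
    apply Rmult_le_compat_r; [apply pow2_ge_0|]. simpl; nra. }
  assert (tau * (K * (Q * h ^ 3) ^ 2) <= tau * (K * (Rabs c + 2 * Rabs g * B + Rabs e) ^ 2))
    by (apply Rmult_le_compat_l; [lra|apply Rmult_le_compat_l; assumption]).
  nra.
Qed.

Theorem mainTheorem3 :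
  forall c g e K B : R,
  exists a : R,
  forall (h tau : R) (theta : Z -> R),
    0 < h -> h <= 1 -> 0 < tau -> tau <= K * h ^ 6 ->
    is_l2 theta ->
    (forall i : Z, Rabs (theta i) <= B) ->
    (forall i : Z, Rabs (theta (i + 1)%Z - theta i) / h <= B) ->
    opnorm_le (Tapply c g e h tau theta) (exp (a * tau)).
Proof.
  intros c g e K B.
  set (A := 3 * Rabs g * B + 30 * K * (Rabs c + 2 * Rabs g * B + Rabs e) ^ 2).
  exists (A / 2).
  intros h tau theta Hh Hh1 Htau HK _ HB Hdiff.
  assert (B0 : 0 <= B) by (eapply Rle_trans; [apply Rabs_pos|apply (HB 0%Z)]).
  assert (HD : forall i, Rabs (theta (i + 1)%Z - theta i) <= B * h).
  { intros i; specialize (Hdiff i).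
    apply Rle_div_l in Hdiff; lra. }
  pose proof (kdv_growth_le c g e K B h tau Hh Hh1 Htau HK B0) as Hgrowth; fold A in Hgrowth.
  assert (HC : 0 <= 1 + tau * A).
  { assert (0 <= K) by (pose proof (pow_lt h 6 Hh); nra).
    assert (0 <= A).
    { unfold A; pose proof (Rabs_pos g).
      apply Rplus_le_le_0_compat; [|apply Rmult_le_pos; [lra|apply pow2_ge_0]].
      apply Rmult_le_pos; lra. }
    nra. }
  apply opnorm_le_trans with (sqrt (1 + tau * A)).
  - apply (opnorm_le_of_local _ 2); [exact HC | intros x y i Hxy; apply Tapply_local; exact Hxy|].
    intros x M Hx.
    eapply Rle_trans; [apply (ssum_Tapply_sq_le c g e h tau B (B * h)); assumption|].
    apply Rmult_le_compat_r; [apply ssum_nonneg; intros; apply pow2_ge_0|lra].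
  - replace (A / 2 * tau) with (tau * A / 2) by (unfold Rdiv; ring).
    apply sqrt_one_plus_le_exp, HC.
Qed.
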